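(* Let $H$ be a numerical semigroup, $k$ a field, $R=k[H]$ Gorenstein, $a=\mathrm{a}(R)$, and let $\mathcal{X}_R$ be the set of graded ideals $I$ of $R$ with $R/I$ Gorenstein and $\mu_R(I)\ge 2$. Then $$\mathcal{X}_R=\{R:_Rt^m,\ t^m(R:_Rt^m)\mid m\in\mathbb{N}\setminus H\}.$$ Moreover, for each $m\in\mathbb{N}\setminus H$, $\mathrm{a}(R/(R:_Rt^m))=a-m$ and $\mathrm{a}(R/t^m(R:_Rt^m))=a+m$.
   Context: $R=k[H]=k[t^h\mid h\in H]\subseteq k[t]$ graded by $\deg t=1$; $R:_Rt^m=\{x\in R\mid xt^m\in R\}$. $\mathrm{a}(R)=\mathrm{c}(H)-1=\max(\mathbb{Z}\setminus H)$ with $\mathrm{c}(H)$ the conductor of $H$; for an Artinian graded quotient $R/I$, $\mathrm{a}(R/I)$ is the largest $n$ with $[R/I]_n\neq 0$. $R$ Gorenstein is equivalent to $H$ symmetric. *)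

From mathcomp Require Import all_boot all_algebra.
Set Implicit Arguments. Unset Strict Implicit. Unset Printing Implicit Defensive.
Import GRing.Theory.
Local Open Scope ring_scope.

Definition numerical_semigroup (H : pred nat) : Prop :=
  [/\ H 0%N, (forall a b, H a -> H b -> H (a + b)%N)
    & exists N, forall n, (N <= n)%N -> H n].

Definition is_conductor (H : pred nat) (c : nat) : Prop :=
  (forall n, (c <= n)%N -> H n) /\
  (forall c', (forall n, (c' <= n)%N -> H n) -> (c <= c')%N).

(* H symmetric (equivalently R = k[H] Gorenstein): for n < c,
   n \in H  iff  c-1-n \notin H. *)
Definition symmetric_sg (H : pred nat) (c : nat) : Prop :=
  forall n, (n < c)%N -> H n = ~~ H (c.-1 - n)%N.

Section SemigroupRing.
Variables (k : fieldType) (H : pred nat).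

(* R = k[H] as the subring of k[t] = {poly k} of polynomials supported in H. *)
Definition inR (p : {poly k}) : Prop := forall i, p`_i != 0 -> H i.

Definition is_ideal (I : {poly k} -> Prop) : Prop :=
  [/\ forall p, I p -> inR p, I 0,
      forall p q, I p -> I q -> I (p + q)
    & forall r p, inR r -> I p -> I (r * p)].

Definition graded_ideal (I : {poly k} -> Prop) : Prop :=
  is_ideal I /\ forall p i, I p -> I (p`_i *: 'X^i).

Definition generated_by (gs : seq {poly k}) (I : {poly k} -> Prop) : Prop :=
  (forall j, (j < size gs)%N -> inR gs`_j) /\
  forall p, I p <-> exists rs : seq {poly k},
     [/\ size rs = size gs, (forall j, (j < size rs)%N -> inR rs`_j)
       & p = \sum_(j < size gs) rs`_j * gs`_j].

(* mu_R(I) >= n : every generating set of I has at least n elements. *)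
Definition mu_ge (I : {poly k} -> Prop) (n : nat) : Prop :=
  forall gs, generated_by gs I -> (n <= size gs)%N.

(* Socle of R/I, lifted to R: p in R with m * p \subseteq I,
   m = R_+ the graded maximal ideal. *)
Definition socle_lift (I : {poly k} -> Prop) (p : {poly k}) : Prop :=
  inR p /\ forall q, inR q -> q`_0 = 0 -> I (q * p).

(* R/I is (Artinian) Gorenstein: its socle 0 :_{R/I} m is a
   one-dimensional k-vector space. *)
Definition gorenstein_quot (I : {poly k} -> Prop) : Prop :=
  exists s, [/\ socle_lift I s, ~ I s &
    forall p, socle_lift I p -> exists c : k, I (p - c *: s)].

Definition quot_deg_nonzero (I : {poly k} -> Prop) (n : nat) : Prop :=
  exists c : k, inR (c *: 'X^n) /\ ~ I (c *: 'X^n).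

(* a(R/I) = n : largest n with [R/I]_n <> 0. *)
Definition a_inv (I : {poly k} -> Prop) (n : nat) : Prop :=
  quot_deg_nonzero I n /\ forall j, quot_deg_nonzero I j -> (j <= n)%N.

Definition colon (m : nat) (p : {poly k}) : Prop := inR p /\ inR (p * 'X^m).

Definition tcolon (m : nat) (p : {poly k}) : Prop :=
  exists x, colon m x /\ p = 'X^m * x.

Definition in_XR (I : {poly k} -> Prop) : Prop :=
  [/\ graded_ideal I, gorenstein_quot I & mu_ge I 2].

End SemigroupRing.

From mathcomp Require Import all_boot all_algebra.
From mathcomp Require Import zify.
From Stdlib Require Import Classical FunctionalExtensionality PropExtensionality.
Set Implicit Arguments. Unset Strict Implicit. Unset Printing Implicit Defensive.
Import GRing.Theory.
Local Open Scope ring_scope.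

(* A graded ideal of R is spanned by the monomials t^i, i in E, for a
   semigroup ideal E of H (E in H, E + H in E); we write monideal E for it.
   The socle of R/monideal E is spanned by the t^i, i in H \ E, with
   i + (H \ 0) in E.  Hence R/monideal E is Gorenstein iff this set is a
   singleton {f}, and then, H having finite complement, E is the set
   nondivisors f = { i in H | i > f or f - i notin H } of the elements of H that do
   not divide f; conversely nondivisors f always has the single socle
   degree f, which is also the a-invariant a(R/monideal (nondivisors f)).
   For H symmetric the colon ideals are of this shape:
     R :_R t^m       = monideal (nondivisors (c-1-m)),
     t^m (R :_R t^m) = monideal (nondivisors (c-1+m)),   m a gap of H,
   and every nondivisors f is one of them, or else f = c-1+m with m in H,
   i.e. the principal ideal t^m R, which has mu_R = 1.  Finally a monomial
   ideal stable under translation by a gap of H is not principal. *)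

Lemma pred_ext (T : Type) (P Q : T -> Prop) : (forall x, P x <-> Q x) -> P = Q.
Proof.
by move=> h; apply: functional_extensionality => x; apply: propositional_extensionality.
Qed.

Section PolyFacts.
Variable k : fieldType.

Lemma coefZXn_neq0 (a : k) n i : (a *: 'X^n : {poly k})`_i != 0 -> i = n.
Proof. by rewrite coefZ coefXn; case: (eqVneq i n) => //= _; rewrite mulr0 eqxx. Qed.

Lemma coefXn_neq0 n i : ('X^n : {poly k})`_i != 0 -> i = n.
Proof. by rewrite coefXn; case: (eqVneq i n) => //= _; rewrite eqxx. Qed.

Lemma divXn (p : {poly k}) m : (forall i, (i < m)%N -> p`_i = 0) ->
  exists q : {poly k}, p = 'X^m * q /\ forall i, q`_i = p`_(i + m).
Proof.
move=> hp; exists (\poly_(i < size p) p`_(i + m)); split; last first.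
  move=> i; rewrite coef_poly; case: ltnP => // hs.
  by rewrite nth_default // (leq_trans hs) // leq_addr.
apply/polyP => i; rewrite coefXnM; case: ltnP => h; first by rewrite hp.
rewrite coef_poly subnK //; case: ltnP => // hs.
by rewrite nth_default // (leq_trans hs) // leq_subr.
Qed.

Lemma lowest_coef (p : {poly k}) : p != 0 ->
  exists e, p`_e != 0 /\ forall j, (j < e)%N -> p`_j = 0.
Proof.
move=> p0; have ex : exists i, p`_i != 0.
  by exists (size p).-1; rewrite -lead_coefE lead_coef_eq0.
case: (ex_minnP ex) => e pe emin; exists e; split => // j hj.
by case: (eqVneq p`_j 0) => // /emin; rewrite leqNgt hj.
Qed.

Lemma coefM_lowest (r g : {poly k}) e d :
  (forall j, (j < e)%N -> r`_j = 0) -> (forall j, (j < d)%N -> g`_j = 0) ->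
  (r * g)`_(e + d) = r`_e * g`_d.
Proof.
move=> /divXn [r' [-> _]] /divXn [g' [-> _]].
by rewrite mulrACA -exprD !coefXnM !ltnn !subnn coef0M.
Qed.

End PolyFacts.

Section MonomialIdeals.
Variables (k : fieldType) (H : pred nat).
Hypothesis H0 : H 0%N.
Hypothesis Hadd : forall a b, H a -> H b -> H (a + b)%N.
Hypothesis Hfin : exists N, forall n, (N <= n)%N -> H n.

Definition monideal (E : nat -> Prop) (p : {poly k}) : Prop :=
  forall i, p`_i != 0 -> E i.

Definition sg_ideal (E : nat -> Prop) : Prop :=
  (forall i, E i -> H i) /\ (forall i j, E i -> H j -> E (i + j)%N).

Definition socle_degree (E : nat -> Prop) (i : nat) : Prop :=
  [/\ H i, ~ E i & forall h, H h -> (0 < h)%N -> E (i + h)%N].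

Definition nondivisors (f i : nat) : Prop := H i /\ ~ ((i <= f)%N /\ H (f - i)%N).

Definition colon_set (m i : nat) : Prop := H i /\ H (i + m)%N.
Definition tcolon_set (m i : nat) : Prop := [/\ H i, (m <= i)%N & H (i - m)%N].

Lemma inR_Xn n : H n -> inR H ('X^n : {poly k}).
Proof. by move=> hn i /coefXn_neq0 ->. Qed.

Lemma inR_C (a : k) : inR H a%:P.
Proof. by move=> i; rewrite coefC; case: (eqVneq i 0%N) => [-> //|_]; rewrite eqxx. Qed.

Lemma monideal_Xn E n : monideal E ('X^n : {poly k}) <-> E n.
Proof.
split=> [hn|En i /coefXn_neq0 -> //].
by apply: hn; rewrite coefXn eqxx oner_neq0.
Qed.

Lemma colon_monideal m : colon H m = monideal (colon_set m).
Proof.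
apply: pred_ext => p; split.
  move=> [hp hpm] i ni; split; first exact: hp.
  by have := hpm (i + m)%N; rewrite coefMXn ltnNge leq_addl /= addnK; apply.
move=> hs; split=> [i /hs [] //|i].
rewrite coefMXn; case: ltnP => [_|hmi]; first by rewrite eqxx.
by move=> /hs [_]; rewrite subnK.
Qed.

Lemma tcolon_monideal m : tcolon H m = monideal (tcolon_set m).
Proof.
apply: pred_ext => p; split.
  move=> [x [[hx hxm] ->]] i; rewrite coefXnM.
  case: ltnP => hmi ni; first by move: ni; rewrite eqxx.
  by split => //; [apply: hxm; rewrite coefMXn ltnNge hmi | exact: hx].
move=> hs.
have [q [hpq hq]] : exists q : {poly k}, p = 'X^m * q /\ forall i, q`_i = p`_(i + m).
  apply: divXn => i him; apply/eqP; apply: contraT => /hs [_ hmi _].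
  by move: him; rewrite ltnNge hmi.
exists q; split=> //; split.
  by move=> i; rewrite hq => /hs [_ _]; rewrite addnK.
by rewrite mulrC -hpq => i /hs [].
Qed.

Lemma monideal_graded E : sg_ideal E -> graded_ideal H (monideal E).
Proof.
move=> [EH Eadd]; split; last first.
  by move=> p i hp j /[dup] /coefZXn_neq0 ->; rewrite coefZ coefXn eqxx mulr1; apply: hp.
split=> [p hp i /hp /EH //|i|p q hp hq i|r p hr hp i ni].
- by rewrite coef0 eqxx.
- by rewrite coefD; case: (eqVneq p`_i 0) => [->|/hp //]; rewrite add0r; apply: hq.
have : ~~ [forall j : 'I_i.+1, r`_j * p`_(i - j) == 0].
  by apply: contra ni => /forallP h; rewrite coefM big1 // => j _; apply/eqP.
move/forallPn => [j]; rewrite mulf_eq0 negb_or => /andP[rj pj].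
by have := Eadd _ _ (hp _ pj) (hr _ rj); rewrite subnK // -ltnS.
Qed.

Lemma graded_monideal I : graded_ideal H I -> exists E, sg_ideal E /\ I = monideal E.
Proof.
move=> [[hR hI0 hIadd hImul] hgr]; exists (fun i => I 'X^i); split.
  split=> [i /hR|i j hi hj]; first by apply; rewrite coefXn eqxx oner_neq0.
  by rewrite addnC exprD; apply: hImul (inR_Xn hj) hi.
apply: pred_ext => p; split.
  move=> hp i pi; have := hImul _ _ (@inR_C (p`_i)^-1) (hgr _ i hp).
  by rewrite mul_polyC scalerA mulVf // scale1r.
move=> hp; rewrite -[p]coefK poly_def; apply: big_ind => // i _.
case: (eqVneq p`_i 0) => [->|pi]; first by rewrite scale0r.
by rewrite -mul_polyC; apply: hImul; [exact: inR_C | exact: hp].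
Qed.

Lemma socle_lift_monideal E p : socle_lift H (monideal E) p ->
  forall i, p`_i != 0 -> H i /\ (forall h, H h -> (0 < h)%N -> E (i + h)%N).
Proof.
move=> [hp hq] i ni; split; first exact: hp.
move=> h hh h0; have := hq 'X^h (inR_Xn hh).
rewrite coefXn eq_sym (negbTE (lt0n_neq0 h0)) => /(_ erefl) /(_ (i + h)%N).
by rewrite coefXnM ltnNge leq_addl /= addnK; apply.
Qed.

Lemma socle_lift_Xn E i : H i -> (forall h, H h -> (0 < h)%N -> E (i + h)%N) ->
  socle_lift H (monideal E) 'X^i.
Proof.
move=> hi hs; split; first exact: inR_Xn.
move=> q hq q0 j; rewrite coefMXn; case: ltnP => hij nj; first by move: nj; rewrite eqxx.
have := hs _ (hq _ nj); rewrite subnKC //; apply.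
by rewrite lt0n; apply: contra nj => /eqP->; rewrite q0.
Qed.

Lemma gorenstein_unique_socle E : gorenstein_quot H (monideal E) <->
  exists f, socle_degree E f /\ forall i, socle_degree E i -> i = f.
Proof.
split=> [[s [hs hns hsu]]|[f [[hf nEf hfs] huniq]]].
  have [f [sf nEf]] : exists f, s`_f != 0 /\ ~ E f.
    apply: NNPP => hn; apply: hns => i si; apply: NNPP => nEi; apply: hn; by exists i.
  have [hf hfs] := socle_lift_monideal hs sf.
  exists f; split => // i [hi nEi hsi].
  have [a ha] := hsu _ (socle_lift_Xn hi hsi).
  apply: NNPP => nif; case: (eqVneq a 0) => [a0|a0].
    by apply: nEi; apply: ha; rewrite a0 scale0r subr0 coefXn eqxx oner_neq0.
  apply: nEf; apply: (ha f); rewrite coefB coefZ coefXn.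
  have -> : (f == i) = false by apply/eqP => e; apply: nif; rewrite e.
  by rewrite sub0r oppr_eq0 mulf_neq0.
exists 'X^f; split; [exact: socle_lift_Xn | by rewrite monideal_Xn |].
move=> p hp; exists p`_f => i; rewrite coefB coefZ coefXn.
case: (eqVneq i f) => [->|nif]; first by rewrite mulr1 subrr eqxx.
rewrite mulr0 subr0 => ni; have [hi hsi] := socle_lift_monideal hp ni.
by apply: NNPP => nEi; move/eqP: nif; apply; apply: huniq.
Qed.

Lemma nondivisors_self f : ~ nondivisors f f.
Proof. by move=> [_]; apply; rewrite subnn. Qed.

Lemma not_nondivisors f i : H i -> ~ nondivisors f i -> (i <= f)%N /\ H (f - i)%N.
Proof. by move=> hi nd; apply: NNPP => ndiv; apply: nd. Qed.

(* nondivisors f is a semigroup ideal: if i + j divides f then so does i. *)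
Lemma sg_ideal_nondivisors f : sg_ideal (nondivisors f).
Proof.
split=> [i [] //|i j [hi ndiv] hj]; split; first exact: Hadd.
move=> [hle hfij]; apply: ndiv; split; first lia.
have -> : (f - i = f - (i + j) + j)%N by lia.
exact: Hadd.
Qed.

Lemma nondivisors_unique_socle f : H f ->
  socle_degree (nondivisors f) f /\ forall i, socle_degree (nondivisors f) i -> i = f.
Proof.
move=> hf; split.
  split=> // [|h hh h0]; first exact: nondivisors_self.
  by split; [exact: Hadd | move=> [hle _]; lia].
move=> i [hi ndiv hsoc]; apply: NNPP => nif.
have [hif hfi] := not_nondivisors hi ndiv.
by have := hsoc _ hfi ltac:(lia); rewrite subnKC //; apply: nondivisors_self.
Qed.

(* With a unique socle degree f, every element of H outside E divides f:
   climb from h to h + h' outside E until reaching a socle degree, which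
   must happen since E contains all large integers. *)
Lemma nonmember_divides E f : sg_ideal E -> socle_degree E f ->
  (forall i, socle_degree E i -> i = f) ->
  forall h, H h -> ~ E h -> (h <= f)%N /\ H (f - h)%N.
Proof.
move=> [_ Eadd] [hf nEf hfs] huniq; have [N hN] := Hfin.
set B := (f + N.+1 + N)%N.
have Ebig n : (B <= n)%N -> E n.
  move=> hn; have Ef := hfs N.+1 (hN _ (leqnSn N)) (ltn0Sn N).
  have hr : H (n - (f + N.+1))%N by apply: hN; lia.
  have -> : n = (f + N.+1 + (n - (f + N.+1)))%N by lia.
  exact: Eadd.
suff climb n h : (B - h <= n)%N -> H h -> ~ E h -> (h <= f)%N /\ H (f - h)%N.
  by move=> h; apply: (climb _ h (leqnn _)).
elim: n h => [|n IH] h hn hh nEh; first by exfalso; apply: nEh; apply: Ebig; lia.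
case: (classic (socle_degree E h)) => [/huniq ->|nsoc]; first by rewrite leqnn subnn.
have [h' [hh' h'0 nEhh']] : exists h', [/\ H h', (0 < h')%N & ~ E (h + h')%N].
  apply: NNPP => nex; apply: nsoc; split => // h' hh' h'0.
  by apply: NNPP => nE; apply: nex; exists h'.
have hB : (h < B)%N by rewrite ltnNge; apply/negP => /Ebig.
have [le1 hf1] := IH (h + h')%N ltac:(lia) (Hadd hh hh') nEhh'.
split; first lia.
have -> : (f - h = (f - (h + h')) + h')%N by lia.
exact: Hadd.
Qed.

Lemma unique_socle_nondivisors E f : sg_ideal E -> socle_degree E f ->
  (forall i, socle_degree E i -> i = f) -> E = nondivisors f.
Proof.
move=> hE hsoc huniq; have [EH Eadd] := hE; have [_ nEf _] := hsoc.
apply: pred_ext => i; split.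
  move=> Ei; split; first exact: EH.
  by move=> [hif hfi]; apply: nEf; have := Eadd _ _ Ei hfi; rewrite subnKC.
move=> [hi ndiv]; apply: NNPP => nEi.
exact/ndiv/(nonmember_divides hE hsoc huniq).
Qed.

Lemma gorenstein_monideal E : sg_ideal E ->
  gorenstein_quot H (monideal E) <-> exists f, H f /\ E = nondivisors f.
Proof.
move=> hE; apply: iff_trans (gorenstein_unique_socle E) _; split.
  move=> [f [hsoc huniq]]; exists f; split; first by case: hsoc.
  exact: unique_socle_nondivisors.
by move=> [f [hf ->]]; exists f; apply: nondivisors_unique_socle.
Qed.

Lemma quot_deg_nonzero_monideal E n :
  quot_deg_nonzero H (monideal E) n <-> H n /\ ~ E n.
Proof.
split=> [[a [ha hna]]|[hn nEn]]; last first.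
  by exists 1; rewrite scale1r; split; [exact: inR_Xn | rewrite monideal_Xn].
have a0 : a != 0.
  by apply: contraPneq hna => -> []; rewrite scale0r => i; rewrite coef0 eqxx.
have an : (a *: 'X^n : {poly k})`_n != 0 by rewrite coefZ coefXn eqxx mulr1.
by split; [exact: ha | move=> En; apply: hna => i /coefZXn_neq0 ->].
Qed.

(* a(R/monideal (nondivisors f)) = f: f is the largest divisor of f. *)
Lemma a_inv_nondivisors f : H f -> a_inv H (monideal (nondivisors f)) f.
Proof.
move=> hf; split; first by apply/quot_deg_nonzero_monideal; split; last exact: nondivisors_self.
by move=> j /quot_deg_nonzero_monideal [hj /(not_nondivisors hj) []].
Qed.

(* A nonzero monomial ideal stable under translation by a gap F of H needs
   at least two generators: if g generated it, with lowest degree d, then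
   t^(F+d) = r g would force F to be the lowest degree of r in R. *)
Lemma mu_ge2_monideal E n0 F : (forall i, E i -> H i) -> E n0 -> ~~ H F ->
  (forall d, E d -> E (F + d)%N) -> mu_ge H (monideal E) 2.
Proof.
move=> EH En0 nHF hEF gs [hgs hgen].
have Xn0 n : ('X^n : {poly k}) != 0 by apply: monic_neq0; apply: monicXn.
case: gs hgs hgen => [|g [|g2 gs]] hgs hgen //.
  have [rs [_ _]] := (hgen _).1 ((monideal_Xn _ _).2 En0).
  by rewrite big_ord0 => h0; move: (Xn0 n0); rewrite h0 eqxx.
exfalso.
have gI : monideal E g.
  apply: (hgen g).2; exists [:: 1]; split => //; last by rewrite big_ord1 /= mul1r.
  by move=> [|j] // _; rewrite -polyC1; apply: inR_C.
have gen1 p : monideal E p -> exists r, inR H r /\ p = r * g.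
  move=> /(hgen p).1 [[|r [|r2 rs]] [//= _ hrs hp]].
  by exists r; split; [exact: (hrs 0%N) | rewrite hp big_ord1].
have g0 : g != 0.
  apply: contraT => /negPn /eqP g0.
  have [r [_ hr]] := gen1 _ ((monideal_Xn _ _).2 En0).
  by move: (Xn0 n0); rewrite hr g0 mulr0 eqxx.
have [d [gd gdlow]] := lowest_coef g0.
have [r [hr hrg]] := gen1 _ ((monideal_Xn _ _).2 (hEF _ (gI _ gd))).
have r0 : r != 0.
  by apply: contraTneq isT => r0; move: (Xn0 (F + d)%N); rewrite hrg r0 mul0r eqxx.
have [e [re relow]] := lowest_coef r0.
have : ('X^(F + d) : {poly k})`_(e + d) != 0.
  by rewrite hrg coefM_lowest // mulf_neq0.
move/coefXn_neq0 => /addIn heF.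
by move: (hr _ re); rewrite heF (negbTE nHF).
Qed.

(* For m in H, t^m (R :_R t^m) = t^m R is principal. *)
Lemma principal_not_mu_ge2 m : H m -> ~ mu_ge H (monideal (tcolon_set m)) 2.
Proof.
move=> hm hmu; suff : (2 <= size [:: ('X^m : {poly k})])%N by [].
apply: hmu; split; first by move=> [|j] //= _; apply: inR_Xn.
rewrite -tcolon_monideal => p; split.
  move=> [x [[hx _] ->]]; exists [:: x]; split => //; first by move=> [|j].
  by rewrite big_ord1 /= mulrC.
move=> [[|r [|r2 rs]] [//= _ hr ->]]; rewrite big_ord1 /=.
exists r; split; last by rewrite mulrC.
split=> [|i]; first exact: hr 0%N erefl.
rewrite coefMXn; case: ltnP => [_|hmi]; first by rewrite eqxx.
by move=> /(hr 0%N erefl) hri; rewrite -(subnK hmi); apply: Hadd.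
Qed.

End MonomialIdeals.

Section Symmetric.
Variables (H : pred nat) (c : nat).
Hypothesis H0 : H 0%N.
Hypothesis Hc : forall n, (c <= n)%N -> H n.
Hypothesis Hsym : symmetric_sg H c.

Lemma gap_lt m : ~~ H m -> (m < c)%N.
Proof. by move=> hm; rewrite ltnNge; apply: contra hm => /Hc. Qed.

Lemma gap_pos m : ~~ H m -> (0 < m)%N.
Proof. by case: m => // /negP; rewrite H0. Qed.

Lemma sym_dual n : (n < c)%N -> H (c.-1 - n)%N = ~~ H n.
Proof. by move=> hn; rewrite (Hsym hn) negbK. Qed.

Lemma frobenius_gap : (0 < c)%N -> ~~ H c.-1.
Proof. by move=> c0; rewrite -[c.-1]subn0 sym_dual // H0. Qed.

Lemma nondivisors_below f : H f -> (f < c)%N -> nondivisors H f = colon_set H (c.-1 - f).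
Proof.
move=> hf fc; apply: pred_ext => i; rewrite /nondivisors /colon_set.
case: (leqP i f) => hif; last first.
  have hic : H (i + (c.-1 - f))%N by apply: Hc; lia.
  by split=> -[hi _]; split => // -[]; lia.
have -> : (i + (c.-1 - f) = c.-1 - (f - i))%N by lia.
rewrite sym_dual; last lia.
split=> -[hi h]; split=> //; first by apply/negP => hfi; apply: h.
by move=> [_ hfi]; move/negP: h.
Qed.

Lemma nondivisors_above f : (c <= f)%N -> nondivisors H f = tcolon_set H (f.+1 - c).
Proof.
move=> cf; apply: pred_ext => i; rewrite /nondivisors /tcolon_set.
case: (ltnP i (f.+1 - c)) => him.
  have hfi : H (f - i)%N by apply: Hc; lia.
  by split=> [[_ []]|[]]; [split=> //; lia | lia].
case: (leqP i f) => hif; last first.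
  have hic : H (i - (f.+1 - c))%N by apply: Hc; lia.
  by split=> [[hi _]|[hi _ _]]; split => // -[]; lia.
have -> : (f - i = c.-1 - (i - (f.+1 - c)))%N by lia.
rewrite sym_dual; last lia.
split=> [[hi h]|[hi _ h]]; last by split=> // -[_]; rewrite h.
by split=> //; apply: negbNE; apply/negP => hn; apply: h.
Qed.

Lemma colon_set_gap m : ~~ H m ->
  H (c.-1 - m)%N /\ colon_set H m = nondivisors H (c.-1 - m).
Proof.
move=> hm; have mc := gap_lt hm; have hf : H (c.-1 - m)%N by rewrite sym_dual.
by split=> //; rewrite nondivisors_below // ?subKn //; lia.
Qed.

Lemma tcolon_set_gap m : ~~ H m -> tcolon_set H m = nondivisors H (c.-1 + m).
Proof.
move=> hm; have := gap_lt hm; have := gap_pos hm => m0 mc.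
by rewrite nondivisors_above; [congr tcolon_set; lia | lia].
Qed.

End Symmetric.

Section Classification.
Variables (k : fieldType) (H : pred nat) (c : nat).
Hypothesis H0 : H 0%N.
Hypothesis Hadd : forall a b, H a -> H b -> H (a + b)%N.
Hypothesis Hc : forall n, (c <= n)%N -> H n.
Hypothesis Hsym : symmetric_sg H c.

Lemma in_XR_nondivisors f : H f ->
  mu_ge H (@monideal k (nondivisors H f)) 2 -> in_XR H (@monideal k (nondivisors H f)).
Proof.
move=> hf hmu; have hE := sg_ideal_nondivisors H0 Hadd f.
have Hfin : exists N, forall n, (N <= n)%N -> H n by exists c.
split=> //; first exact: monideal_graded hE.
by apply/(gorenstein_monideal k H0 Hadd Hfin hE); exists f.
Qed.

(* For a gap m both colon ideals lie in X_R; they are not principal being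
   stable under translation by the Frobenius gap c - 1. *)
Lemma in_XR_colon m : ~~ H m -> @in_XR k H (@colon k H m).
Proof.
move=> hm; have mc := gap_lt Hc hm; have m0 := gap_pos H0 hm.
have [hf hE] := colon_set_gap H0 Hc Hsym hm.
have hmu : mu_ge H (@monideal k (colon_set H m)) 2.
  apply: (mu_ge2_monideal H0 (n0 := c) (F := c.-1)) => [i []//|||d [hd hdm]].
  - by split; apply: Hc; lia.
  - by apply: frobenius_gap H0 Hsym _; lia.
  - have d0 : (0 < d)%N by case: d hd hdm => // _; rewrite add0n (negbTE hm).
    by split; apply: Hc; lia.
by rewrite colon_monideal; rewrite hE in hmu *; apply: in_XR_nondivisors.
Qed.

Lemma in_XR_tcolon m : ~~ H m -> @in_XR k H (@tcolon k H m).
Proof.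
move=> hm; have mc := gap_lt Hc hm; have m0 := gap_pos H0 hm.
have hmu : mu_ge H (@monideal k (tcolon_set H m)) 2.
  apply: (mu_ge2_monideal H0 (n0 := c + m) (F := c.-1)) => [i []//|||d [hd hmd hdm]].
  - by split; [apply: Hc; lia | lia | rewrite addnK; apply: Hc].
  - by apply: frobenius_gap H0 Hsym _; lia.
  - have dm : d != m by apply: contraNneq hm => <-.
    by split; [apply: Hc; lia | lia | apply: Hc; lia].
rewrite tcolon_monideal; rewrite (tcolon_set_gap H0 Hc Hsym hm) in hmu *.
by apply: in_XR_nondivisors => //; apply: Hc; lia.
Qed.

Lemma in_XR_classify (I : {poly k} -> Prop) : in_XR H I ->
  exists m, ~~ H m /\ (I = colon H m \/ I = tcolon H m).
Proof.
move=> [/graded_monideal [// | E [hE ->]] hgor hmu].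
have Hfin : exists N, forall n, (N <= n)%N -> H n by exists c.
have [f [hf hEf]] := (gorenstein_monideal k H0 Hadd Hfin hE).1 hgor.
rewrite {}hEf in hmu *.
case: (ltnP f c) => fc.
  have hm : ~~ H (c.-1 - f)%N by rewrite -(sym_dual Hsym) ?subKn //; lia.
  exists (c.-1 - f)%N; split=> //; left.
  by rewrite colon_monideal (nondivisors_below H0 Hc Hsym hf fc).
have hT := nondivisors_above H0 Hc Hsym fc; rewrite hT in hmu.
exists (f.+1 - c)%N; split; last by right; rewrite tcolon_monideal hT.
by apply/negP => hm; apply: (principal_not_mu_ge2 (k := k) Hadd hm).
Qed.

Lemma a_inv_colon m : ~~ H m -> @a_inv k H (@colon k H m) (c.-1 - m)%N.
Proof.
move=> hm; have [hf hE] := colon_set_gap H0 Hc Hsym hm.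
by rewrite colon_monideal hE; apply: a_inv_nondivisors.
Qed.

Lemma a_inv_tcolon m : ~~ H m -> @a_inv k H (@tcolon k H m) (c.-1 + m)%N.
Proof.
move=> hm; have mc := gap_lt Hc hm; have m0 := gap_pos H0 hm.
rewrite tcolon_monideal (tcolon_set_gap H0 Hc Hsym hm).
by apply: a_inv_nondivisors => //; apply: Hc; lia.
Qed.

End Classification.

Theorem corollary4p2 (k : fieldType) (H : pred nat) (c : nat)
  (hH : numerical_semigroup H) (hc : is_conductor H c)
  (hGor : symmetric_sg H c) :
  (forall I : {poly k} -> Prop,
     @in_XR k H I <->
     exists m : nat, ~~ H m /\
       ((forall p, I p <-> @colon k H m p) \/ (forall p, I p <-> @tcolon k H m p))) /\
  (forall m : nat, ~~ H m ->
     @a_inv k H (@colon k H m) (c.-1 - m)%N /\ @a_inv k H (@tcolon k H m) (c.-1 + m)%N).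
Proof.
case: hH => H0 Hadd _; have [Hc _] := hc.
split=> [I|m hm]; last first.
  by split; [apply: (a_inv_colon k H0 Hc hGor) | apply: (a_inv_tcolon k H0 Hc hGor)].
split.
  move=> /(in_XR_classify H0 Hadd Hc hGor) [m [hm hI]].
  by exists m; split=> //; case: hI => ->; [left | right].
move=> [m [hm [/pred_ext -> | /pred_ext ->]]].
  exact: (in_XR_colon k H0 Hadd Hc hGor).
exact: (in_XR_tcolon k H0 Hadd Hc hGor).
Qed.
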